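(* Let $(u_{k,\ell})_{k,\ell\in\mathbb Z_q}$ be as in the finite-spin model with $u=\min_{k\ne\ell}u_{k,\ell}>0$ and $U=\max_{k,\ell}u_{k,\ell}$, and let $d_{\max}\in\mathbb N_0$. Put $d(u,U,d_{\max})=2+\lfloor d_{\max}(u+U)/u\rfloor$. Then for every $d\ge d(u,U,d_{\max})$, every $\omega^0\in\mathbb Z_q^V$ whose set of broken edges $D$ satisfies $d_D\le d_{\max}$ is stable for the finite-spin model on $\mathcal T^d$, with stability constant $c=(d-1)u-d_{\max}(u+U)>0$.
   Context: $\mathcal T^d=(V,E)$ is the Cayley tree of order $d$ (every vertex has $d+1$ neighbours). Finite-spin model: spins in $\mathbb Z_q=\{0,\dots,q-1\}$, edge energy $\Phi(\omega_v,\omega_w)=u_{\omega_v,\omega_w}$ with $u_{k,\ell}\ge0$, $u_{k,k}=0$. Broken edges of $\omega^0$: $D=\{\{v,w\}\in E:\omega^0_v\ne\omega^0_w\}$; $d_D(v)$ is the number of edges of $D$ incident to $v$, $d_D=\max_v d_D(v)$. For $\omega,\omega^0$ differing at finitely many sites, $H(\omega)-H(\omega^0)=\sum_{\{v,w\}\in E}(\Phi(\omega_v,\omega_w)-\Phi(\omega^0_v,\omega^0_w))$. A configuration $\omega^0$ is stable with stability constant $c>0$ if for all $\omega$ differing from $\omega^0$ at finitely many sites, $H(\omega)-H(\omega^0)\ge c\sum_v\mathbf 1_{\omega_v\ne\omega^0_v}$. *)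

From HB Require Import structures.
From mathcomp Require Import all_boot all_order all_algebra.
From mathcomp Require Import reals.
Set Implicit Arguments. Unset Strict Implicit. Unset Printing Implicit Defensive.
Import Order.TTheory GRing.Theory Num.Theory.
Local Open Scope ring_scope.

(* Cayley tree T^d of order d: the Cayley graph of the free product of d+1
   copies of Z/2, i.e. reduced words over the alphabet 'I_d.+1 (no two
   consecutive equal letters); vertex s is adjacent to a*s for each letter a. *)
Definition reduced (d : nat) (s : seq 'I_d.+1) : bool :=
  sorted (fun a b => a != b) s.

Definition vertex (d : nat) := {s : seq 'I_d.+1 | reduced s}.

Definition nb_seq (d : nat) (a : 'I_d.+1) (s : seq 'I_d.+1) : seq 'I_d.+1 :=
  if s is b :: t then (if b == a then t else a :: s) else [:: a].

Lemma nb_seq_reduced (d : nat) (a : 'I_d.+1) (s : seq 'I_d.+1) :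
  reduced s -> reduced (nb_seq a s).
Proof.
case: s => [|b t] //= Hs.
case: eqP => [_|/eqP Hba].
  by case: t Hs => [|c t] //= /andP [].
by rewrite /reduced /= eq_sym Hba.
Qed.

Definition nb (d : nat) (v : vertex d) (a : 'I_d.+1) : vertex d :=
  exist _ (nb_seq a (val v)) (nb_seq_reduced a (svalP v)).

Definition broken_deg (d q : nat) (w0 : vertex d -> 'I_q) (v : vertex d) : nat :=
  #|[pred a : 'I_d.+1 | w0 v != w0 (nb v a)]|.

(* H(w) - H(w0) = sum over edges {v,w} of (Phi(w_v,w_w) - Phi(w0_v,w0_w)),
   computed from a finite duplicate-free list S of vertices containing every
   site where w and w0 differ (all other edge terms vanish).  Each edge with
   both endpoints in S is met twice (once from each endpoint), hence weight 1/2;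
   each edge with exactly one endpoint in S is met once. *)
Definition Hdiff (R : realType) (d q : nat) (u : 'I_q -> 'I_q -> R)
  (w w0 : vertex d -> 'I_q) (S : seq (vertex d)) : R :=
  \sum_(v <- S) \sum_(a : 'I_d.+1)
     (if nb v a \in S then 2^-1 else 1) *
     (u (w v) (w (nb v a)) - u (w0 v) (w0 (nb v a))).

Definition stable (R : realType) (d q : nat) (u : 'I_q -> 'I_q -> R)
  (w0 : vertex d -> 'I_q) (c : R) : Prop :=
  0 < c /\
  forall (w : vertex d -> 'I_q) (S : seq (vertex d)),
    uniq S -> (forall v, w v != w0 v -> v \in S) ->
    c * (count (fun v => w v != w0 v) S)%:R <= Hdiff u w w0 S.

Definition umax (R : realType) (q : nat) (u : 'I_q -> 'I_q -> R) : R :=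
  \big[Num.max/0]_(k : 'I_q) \big[Num.max/0]_(l : 'I_q) u k l.

(* u = min_{k <> l} u_{k,l} (the default umax is harmless: it dominates all entries) *)
Definition umin (R : realType) (q : nat) (u : 'I_q -> 'I_q -> R) : R :=
  \big[Num.min/umax u]_(k : 'I_q) \big[Num.min/umax u]_(l : 'I_q | l != k) u k l.

From HB Require Import structures.
From mathcomp Require Import all_boot all_order all_algebra.
From mathcomp Require Import reals lra.
Import Order.TTheory GRing.Theory Num.Theory.
Local Open Scope ring_scope.
Set Implicit Arguments. Unset Strict Implicit.

(* Split the energy change of every edge between its endpoints.  A changed
   vertex v gains at least u on each unbroken edge to an unchanged neighbour
   and loses at most u + U on each of its at most d_max broken edges, so it
   collects at least (d + 1 - N_v) u - d_max (u + U), where N_v is its number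
   of changed neighbours.  The changed vertices induce a forest in the tree,
   hence the N_v sum to at most twice their number, which leaves at least
   (d - 1) u - d_max (u + U) per changed vertex. *)

Lemma sum_seq_pred1 (V : nmodType) (T : eqType) (S : seq T) (y : T)
    (g : T -> V) : uniq S ->
  \sum_(x <- S) (if y == x then g x else 0) = if y \in S then g y else 0.
Proof.
move=> uS; have [yS|yNS] := boolP (y \in S).
  rewrite (bigD1_seq y) //= eqxx big1 ?addr0 // => x.
  by rewrite eq_sym => /negbTE->.
by rewrite big1_seq // => x /andP[_ xS]; case: eqP xS => // <-; rewrite (negbTE yNS).
Qed.

Lemma sumr_bool_mull (R : pzSemiRingType) (I : Type) (r : seq I) (P : pred I)
    (F : I -> R) :
  \sum_(i <- r) (P i)%:R * F i = \sum_(i <- r | P i) F i.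
Proof.
by rewrite [RHS]big_mkcond; apply: eq_bigr => i _; case: (P i); rewrite ?mul1r ?mul0r.
Qed.

Section CayleyTree.
Variable d : nat.
Implicit Types (v x : vertex d) (a : 'I_d.+1) (S : seq (vertex d)).

Lemma nbK v a : nb (nb v a) a = v.
Proof.
apply: val_inj; case: v => [[|b t] Hs] /=; rewrite /nb_seq ?eqxx //.
case: eqP => [<-|_] /=; last by rewrite eqxx.
by case: t Hs => [|c t] //= /andP [/negbTE]; rewrite eq_sym => ->.
Qed.

Lemma nb_eqC v x a : (nb v a == x) = (nb x a == v).
Proof. by apply/eqP/eqP => <-; rewrite nbK. Qed.

(* Edges oriented towards the root, the empty word. *)
Definition toward_root v a : bool := ohead (val v) == Some a.

Lemma toward_root_nb v a : toward_root (nb v a) a = ~~ toward_root v a.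
Proof.
rewrite /toward_root; case: v => [[|b t] Hs] /=; rewrite /nb_seq ?eqxx //.
rewrite (inj_eq Some_inj); have [<-|hba] := eqVneq b a; last by rewrite /= eqxx.
case: t Hs => [|c t] //= /andP [hbc _].
by rewrite (inj_eq Some_inj) eq_sym (negbTE hbc).
Qed.

Lemma sum_toward_root_le1 v : (\sum_a toward_root v a <= 1)%N.
Proof.
rewrite /toward_root; case: (val v) => [|b t] /=; first by rewrite big1.
rewrite (bigD1 b) //= eqxx big1 // => a.
by rewrite (inj_eq Some_inj) eq_sym => /negbTE->.
Qed.

Lemma sum_arcs_rev (V : nmodType) S (f : vertex d -> vertex d -> 'I_d.+1 -> V) :
  uniq S ->
  \sum_(v <- S) \sum_a (if nb v a \in S then f v (nb v a) a else 0) =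
  \sum_(v <- S) \sum_a (if nb v a \in S then f (nb v a) v a else 0).
Proof.
move=> uS.
transitivity (\sum_(v <- S) \sum_a \sum_(x <- S) if nb v a == x then f v x a else 0).
  by apply: eq_bigr => v _; apply: eq_bigr => a _; rewrite sum_seq_pred1.
rewrite exchange_big; under eq_bigr do rewrite exchange_big; rewrite exchange_big /=.
apply: eq_bigr => x _; apply: eq_bigr => a _.
rewrite -(sum_seq_pred1 _ (fun v => f v x a) uS).
by apply: eq_bigr => v _; rewrite nb_eqC.
Qed.

(* Every edge inside [X] is counted twice on the left; orienting it towards
   the root charges it to its lower endpoint, which has at most one such edge. *)
Lemma sum_inner_deg_le (X : seq (vertex d)) : uniq X ->
  (\sum_(v <- X) \sum_a (nb v a \in X) <= (size X).*2)%N.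
Proof.
move=> uX.
have split_arc (v : vertex d) (a : 'I_d.+1) : ((nb v a \in X : nat) =
    ((nb v a \in X) && toward_root v a) +
    (if nb v a \in X then (~~ toward_root v a : nat) else 0))%N.
  by case: (nb v a \in X); case: toward_root.
under eq_bigr do under eq_bigr do rewrite split_arc.
under eq_bigr do rewrite big_split /=.
rewrite big_split /= (sum_arcs_rev (fun v _ a => ~~ toward_root v a : nat) uX) /=.
rewrite -addnn -(sum1_size X) leq_add //.
  apply: leq_sum => v _; apply: leq_trans (sum_toward_root_le1 v).
  by apply: leq_sum => a _; case: (_ \in _); case: toward_root.
apply: leq_sum => v _; apply: leq_trans (sum_toward_root_le1 v).
by apply: leq_sum => a _; rewrite toward_root_nb negbK; case: (_ \in _).
Qed.

End CayleyTree.

Section Energy.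
Variables (R : realType) (q : nat) (u : 'I_q -> 'I_q -> R) (um UM : R).
Hypotheses (u_ge0 : forall k l, 0 <= u k l) (u_diag : forall k, u k k = 0).
Hypotheses (u_le : forall k l, u k l <= UM) (u_ge : forall k l, k != l -> um <= u k l).
Hypothesis um_ge0 : 0 <= um.

(* The share of the energy change on an edge vx attributed to v, where [av],
   [ax] tell whether v, x changed and [br] whether vx is broken in w0. *)
Definition charge (av ax br : bool) : R :=
  av%:R * (um * (~~ ax)%:R - (um + UM) * br%:R).

Lemma charge_le_energy k l k0 l0 :
  charge (k != k0) (l != l0) (k0 != l0) + charge (l != l0) (k != k0) (k0 != l0)
  <= u k l - u k0 l0.
Proof.
have := u_ge0 k l; have := u_le k0 l0; have := u_ge0 k0 l0; have := um_ge0.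
rewrite /charge; have [->|hk] := eqVneq k k0; have [->|hl] := eqVneq l l0;
  have [e|_] := eqVneq k0 l0; move=> /= ? ? ? ?; try lra.
- by rewrite -e eq_sym in hl; have := u_ge hl; rewrite e u_diag; lra.
- by rewrite e in hk; have := u_ge hk; rewrite e u_diag; lra.
- by rewrite e u_diag; lra.
Qed.

Section Configuration.
Variables (d : nat) (w w0 : vertex d -> 'I_q) (S : seq (vertex d)).
Hypotheses (uS : uniq S) (supp : forall v, w v != w0 v -> v \in S).

Let changed v := w v != w0 v.
Let arc_charge v x := charge (changed v) (changed x) (w0 v != w0 x).

Lemma charges_le_Hdiff :
  \sum_(v <- S) \sum_(a : 'I_d.+1) arc_charge v (nb v a) <= Hdiff u w w0 S.
Proof.
pose half x : R := if x \in S then 2^-1 else 1.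
have outside_charge0 v x : x \notin S -> arc_charge x v = 0.
  move=> xNS; have /negbTE unchanged_x := contra (@supp x) xNS.
  by rewrite /arc_charge /charge /changed unchanged_x mul0r.
have arc_le v x : arc_charge v x + arc_charge x v <= u (w v) (w x) - u (w0 v) (w0 x).
  by rewrite /arc_charge [w0 x == _]eq_sym; apply: charge_le_energy.
(* Each edge inside [S] is seen from both ends, so its two charges are halved. *)
have -> : \sum_(v <- S) \sum_(a : 'I_d.+1) arc_charge v (nb v a) =
    \sum_(v <- S) \sum_(a : 'I_d.+1)
      half (nb v a) * (arc_charge v (nb v a) + arc_charge (nb v a) v).
  have rev : \sum_(v <- S) \sum_(a : 'I_d.+1) half (nb v a) * arc_charge (nb v a) v =
      \sum_(v <- S) \sum_(a : 'I_d.+1)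
        (if nb v a \in S then 2^-1 * arc_charge v (nb v a) else 0).
    rewrite (sum_arcs_rev (fun v x _ => 2^-1 * arc_charge v x) uS).
    apply: eq_bigr => v _; apply: eq_bigr => a _; rewrite /half.
    by case: ifPn => // /outside_charge0 ->; rewrite mulr0.
  under [RHS]eq_bigr do under eq_bigr do rewrite mulrDr.
  under [RHS]eq_bigr do rewrite big_split /=.
  rewrite big_split /= rev -big_split /=; apply: eq_bigr => v _.
  rewrite -big_split /=; apply: eq_bigr => a _; rewrite /half.
  by case: ifP => _; rewrite ?addr0 ?mul1r //; lra.
rewrite /Hdiff; apply: ler_sum => v _; apply: ler_sum => a _.
by apply: ler_wpM2l (arc_le _ _); rewrite /half; case: ifP => _; lra.
Qed.

Let changed_deg v := (\sum_(a : 'I_d.+1) changed (nb v a))%N.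

Lemma sum_charge_nb v : \sum_(a : 'I_d.+1) arc_charge v (nb v a) =
  (changed v)%:R *
    (um * ((d.+1)%:R - (changed_deg v)%:R) - (um + UM) * (broken_deg w0 v)%:R).
Proof.
have unchanged_deg : \sum_(a : 'I_d.+1) ((~~ changed (nb v a))%:R : R) =
    (d.+1)%:R - (changed_deg v)%:R.
  apply/eqP; rewrite eq_sym subr_eq natr_sum -big_split /=.
  rewrite (eq_bigr (fun=> 1)) ?sumr_const ?card_ord // => a _.
  by case: (changed _); rewrite /= ?add0r ?addr0.
have broken_degE : \sum_(a : 'I_d.+1) ((w0 v != w0 (nb v a))%:R : R) =
    (broken_deg w0 v)%:R.
  rewrite /broken_deg -sum1_card natr_sum [RHS]big_mkcond /=.
  by apply: eq_bigr => a _; rewrite inE; case: ifP.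
by rewrite /arc_charge /charge -mulr_sumr sumrB -!mulr_sumr unchanged_deg broken_degE.
Qed.

Lemma sum_changed_deg_le :
  (\sum_(v <- S | changed v) changed_deg v <= (count changed S).*2)%N.
Proof.
rewrite -size_filter -big_filter.
have -> : (\sum_(v <- filter changed S) changed_deg v =
    \sum_(v <- filter changed S) \sum_(a : 'I_d.+1) (nb v a \in filter changed S))%N.
  apply: eq_bigr => v _; apply: eq_bigr => a _; rewrite mem_filter.
  by case: (boolP (changed _)) => // /supp ->.
exact: sum_inner_deg_le (filter_uniq _ uS).
Qed.

Lemma Hdiff_ge_count (dmax : nat) : (forall v, broken_deg w0 v <= dmax)%N ->
  ((d%:R - 1) * um - dmax%:R * (um + UM)) * (count changed S)%:R <= Hdiff u w w0 S.
Proof.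
move=> hD; set n := count changed S.
have sum_const (x : R) : \sum_(v <- S | changed v) x = x * n%:R.
  by rewrite /n -sum1_count natr_sum mulr_sumr; apply: eq_bigr => v _; rewrite mulr1.
have deg_le : um * (\sum_(v <- S | changed v) changed_deg v)%:R <= um * (2 * n%:R).
  by rewrite ler_wpM2l // -natrM mul2n ler_nat sum_changed_deg_le.
apply: le_trans (charges_le_Hdiff).
under eq_bigr do rewrite sum_charge_nb.
rewrite sumr_bool_mull.
apply: le_trans (_ : _ <= \sum_(v <- S | changed v)
    (um * ((d.+1)%:R - (changed_deg v)%:R) - (um + UM) * dmax%:R)) _; last first.
  apply: ler_sum => v _; rewrite lerD2l lerN2 ler_wpM2l ?ler_nat //.
  by have := le_trans (u_ge0 (w0 v) (w0 v)) (u_le _ _); have := um_ge0; lra.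
under eq_bigr do rewrite mulrBr.
rewrite !sumrB !sum_const -mulr_sumr -natr_sum -natr1.
lra.
Qed.

End Configuration.

End Energy.

Lemma umax_ge (R : realType) (q : nat) (u : 'I_q -> 'I_q -> R) k l :
  u k l <= umax u.
Proof.
apply: le_trans (le_bigmax 0 (fun k => \big[Num.max/0]_(l : 'I_q) u k l) k).
exact: (le_bigmax 0 (u k) l).
Qed.

Lemma umin_le (R : realType) (q : nat) (u : 'I_q -> 'I_q -> R) k l :
  k != l -> umin u <= u k l.
Proof.
move=> hkl; apply: le_trans (bigmin_le _ k _) _.
by apply: bigmin_le_cond; rewrite eq_sym.
Qed.

Theorem mainTheorem5 (R : realType) (q : nat) (u : 'I_q -> 'I_q -> R)
  (u_ge0 : forall k l, 0 <= u k l) (u_diag : forall k, u k k = 0)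
  (u_pos : 0 < umin u) (dmax : nat) (d : nat)
  (hd : (2 + Num.floor (dmax%:R * (umin u + umax u) / umin u) <= d%:Z)%R)
  (w0 : vertex d -> 'I_q)
  (hD : forall v : vertex d, (broken_deg w0 v <= dmax)%N) :
  stable u w0 ((d%:R - 1) * umin u - dmax%:R * (umin u + umax u)).
Proof.
split.
  have : Num.floor (dmax%:R * (umin u + umax u) / umin u) < d%:Z - 1 by lra.
  by rewrite floor_lt_int ltr_pdivrMr // rmorphB /=; lra.
move=> w S uS supp.
exact: (Hdiff_ge_count u_ge0 u_diag (@umax_ge _ _ u) (@umin_le _ _ u)
  (ltW u_pos) uS supp hD).
Qed.
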